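(* Let $X$ be a set and $\tau$ a topology on $I(X)$ such that $(I(X),\tau)$ is a $T_1$ topological semigroup. Then: (i) each $v(x,y)$ ($x,y\in X$) is $\tau$-clopen, and each $w_1(y)$ and $w_2(y)$ ($y\in X$) is $\tau$-closed; (ii) if moreover $\tau$ is an inverse semigroup topology (inversion is continuous), then the inclusion relation $\{(f,g): f\subseteq g\}$ (as sets of ordered pairs) is closed in $I(X)\times I(X)$ if and only if every $w_1(x)$ is $\tau$-open; (iii) if $\tau$ is a Hausdorff topology making $I(X)$ a topological inverse semigroup, then $\tau_{pp}\subseteq\tau$.
   Context: $I(X)$ is the symmetric inverse semigroup on $X$: the set of all bijections $f:A\to B$ with $A,B\subseteq X$ (including the empty map); write $\mathrm{dom}(f)=A$, $\mathrm{im}(f)=B$. The product is composition: $\mathrm{dom}(f\circ g)=g^{-1}(\mathrm{dom}(f)\cap\mathrm{im}(g))$, $(f\circ g)(x)=f(g(x))$; inverse is $f^{-1}$. For $x,y\in X$: $v(x,y)=\{f: x\in\mathrm{dom}(f), f(x)=y\}$, $w_1(x)=\{f: x\notin\mathrm{dom}(f)\}$, $w_2(y)=\{f: y\notin\mathrm{im}(f)\}$. $\tau_{pp}$ is the topology on $I(X)$ generated by the subbasis of all sets $v(x,y)$, $w_1(x)$, $w_2(y)$. A topological semigroup has continuous multiplication; a topological inverse semigroup additionally has continuous inversion. *)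

From Stdlib Require Import ClassicalEpsilon.
Set Implicit Arguments.

(* Elements of I(X): partial injections X -> X, represented by their graph
   as an option-valued function (x in dom f iff f x = Some _). *)
Record pbij (X : Type) := PBij {
  pfun :> X -> option X;
  pinj : forall a a' b, pfun a = Some b -> pfun a' = Some b -> a = a' }.

Definition pcomp_fun (X : Type) (f g : pbij X) (x : X) : option X :=
  match g x with Some y => f y | None => None end.

Lemma pcomp_inj (X : Type) (f g : pbij X) :
  forall a a' b, pcomp_fun f g a = Some b -> pcomp_fun f g a' = Some b -> a = a'.
Proof.
  intros a a' b; unfold pcomp_fun.
  destruct (g a) as [y|] eqn:Ha; [|discriminate].
  destruct (g a') as [y'|] eqn:Ha'; [|discriminate].
  intros H1 H2. assert (y = y') by (eapply (pinj f); eauto). subst y'.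
  eapply (pinj g); eauto.
Qed.

Definition pcomp (X : Type) (f g : pbij X) : pbij X := @PBij X (pcomp_fun f g) (@pcomp_inj X f g).

Definition pinv_fun (X : Type) (f : pbij X) (y : X) : option X :=
  match excluded_middle_informative (exists x, f x = Some y) with
  | left H => Some (proj1_sig (constructive_indefinite_description _ H))
  | right _ => None
  end.

Lemma pinv_inj (X : Type) (f : pbij X) :
  forall a a' b, pinv_fun f a = Some b -> pinv_fun f a' = Some b -> a = a'.
Proof.
  intros a a' b; unfold pinv_fun.
  destruct (excluded_middle_informative (exists x, f x = Some a)) as [H|]; [|discriminate].
  destruct (excluded_middle_informative (exists x, f x = Some a')) as [H'|]; [|discriminate].
  destruct (constructive_indefinite_description _ H) as [x Hx].
  destruct (constructive_indefinite_description _ H') as [x' Hx'].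
  simpl. intros E1 E2. injection E1; injection E2; intros; subst.
  congruence.
Qed.

Definition pinv (X : Type) (f : pbij X) : pbij X := @PBij X (pinv_fun f) (@pinv_inj X f).

Definition v (X : Type) (x y : X) : pbij X -> Prop := fun f => f x = Some y.
Definition w1 (X : Type) (x : X) : pbij X -> Prop := fun f => f x = None.
Definition w2 (X : Type) (y : X) : pbij X -> Prop := fun f => forall a, f a <> Some y.

Definition pincl (X : Type) (f g : pbij X) : Prop :=
  forall a b, f a = Some b -> g a = Some b.

Definition is_topology (T : Type) (O : (T -> Prop) -> Prop) : Prop :=
  O (fun _ => True) /\
  (forall (F : (T -> Prop) -> Prop), (forall U, F U -> O U) ->
       O (fun t => exists U, F U /\ U t)) /\
  (forall U V, O U -> O V -> O (fun t => U t /\ V t)).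

Definition is_closed (T : Type) (O : (T -> Prop) -> Prop) (C : T -> Prop) :=
  O (fun t => ~ C t).

Definition is_clopen (T : Type) (O : (T -> Prop) -> Prop) (C : T -> Prop) :=
  O C /\ is_closed O C.

Definition T1 (T : Type) (O : (T -> Prop) -> Prop) : Prop :=
  forall a b : T, a <> b -> exists U, O U /\ U a /\ ~ U b.

Definition Hausdorff (T : Type) (O : (T -> Prop) -> Prop) : Prop :=
  forall a b : T, a <> b -> exists U V, O U /\ O V /\ U a /\ V b /\
                         (forall t, ~ (U t /\ V t)).

Definition prod_open (T : Type) (O : (T -> Prop) -> Prop) (W : T * T -> Prop) :=
  forall p, W p -> exists U V, O U /\ O V /\ U (fst p) /\ V (snd p) /\
                         (forall a b, U a -> V b -> W (a, b)).

Definition mul_continuous (X : Type) (O : (pbij X -> Prop) -> Prop) : Prop :=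
  forall f g (W : pbij X -> Prop), O W -> W (pcomp f g) ->
    exists U V, O U /\ O V /\ U f /\ V g /\
      (forall f' g', U f' -> V g' -> W (pcomp f' g')).

Definition inv_continuous (X : Type) (O : (pbij X -> Prop) -> Prop) : Prop :=
  forall W, O W -> O (fun f => W (pinv f)).

Definition generated (T : Type) (S : (T -> Prop) -> Prop) (U : T -> Prop) : Prop :=
  forall O, is_topology O -> (forall V, S V -> O V) -> O U.

Definition pp_subbasis (X : Type) (U : pbij X -> Prop) : Prop :=
  (exists x y, U = v x y) \/ (exists x, U = w1 x) \/ (exists y, U = w2 y).

Definition tau_pp (X : Type) : (pbij X -> Prop) -> Prop := generated (@pp_subbasis X).

(* The whole proof rests on one principle: in a T1 space points are closed,
   so for a continuous self-map F of I(X) and a fixed element c the set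
   {f | F f = c} is closed and {f | F f <> c} is open.  In a topological
   semigroup the translations f |-> a f and f |-> f a are continuous, and
   under continuous inversion so are f |-> f^-1 f and f |-> f f^-1.
   Each set of the subbasis of tau_pp is described by such an equation,
   using the idempotents e_x = {(x,x)}, the point maps {(x,y)} and the
   empty map 0:
     f in v(x,y)     <->  f e_x = {(x,y)}       <->  e_y f e_x <> 0,
     f in w1(x)      <->  f e_x = 0             <->  e_x f^-1 f <> e_x,
     f in w2(y)      <->  e_y f = 0             <->  f f^-1 e_y <> e_y.
   Hence (i) v(x,y) is clopen and w1, w2 are closed; with continuous
   inversion w1(x) and w2(y) are also open, which gives (iii) since
   tau_pp is the coarsest topology containing them.  For (ii) both sides
   hold: the right-hand side was just shown, and the complement of the
   inclusion relation is covered by the open boxes v(a,b) x (not v(a,b)). *)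

From Stdlib Require Import Classical ClassicalEpsilon FunctionalExtensionality
  PropExtensionality ProofIrrelevance.
Set Implicit Arguments.

Lemma pbij_ext (X : Type) (f g : pbij X) : (forall a, f a = g a) -> f = g.
Proof.
  destruct f as [f pf], g as [g pg]; simpl; intros H.
  assert (f = g) by (apply functional_extensionality; exact H). subst g.
  f_equal. apply proof_irrelevance.
Qed.

Definition pt (X : Type) (x y : X) : pbij X.
Proof.
  refine (@PBij X (fun a => if excluded_middle_informative (a = x)
                             then Some y else None) _).
  intros a a' b.
  destruct (excluded_middle_informative (a = x)),
           (excluded_middle_informative (a' = x)); congruence.
Defined.

Definition zero (X : Type) : pbij X := @PBij X (fun _ => None) (fun _ _ _ H _ => match H with end).

Lemma pt_eq (X : Type) (x y : X) : pt x y x = Some y.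
Proof. simpl. destruct (excluded_middle_informative (x = x)); congruence. Qed.

Lemma pt_neq (X : Type) (x y a : X) : a <> x -> pt x y a = None.
Proof. simpl. destruct (excluded_middle_informative (a = x)); congruence. Qed.

Lemma pcomp_apply (X : Type) (f g : pbij X) (a : X) :
  pcomp f g a = match g a with Some y => f y | None => None end.
Proof. reflexivity. Qed.

Lemma pinv_some (X : Type) (f : pbij X) (a b : X) : pinv f b = Some a <-> f a = Some b.
Proof.
  change (pinv_fun f b = Some a <-> f a = Some b). unfold pinv_fun.
  destruct (excluded_middle_informative _) as [H|H].
  - destruct (constructive_indefinite_description _ H) as [x Hx]; simpl.
    split; intro E.
    + injection E; intro; subst; exact Hx.
    + f_equal. eapply pinj; eauto.
  - split; intro E; [discriminate | exfalso; apply H; eauto].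
Qed.

Section Characterisations.
Variable X : Type.
Implicit Types (f : pbij X) (x y : X).

Lemma v_iff_right_idempotent f x y : pcomp f (pt x x) = pt x y <-> f x = Some y.
Proof.
  split.
  - intro E. pose proof (f_equal (fun h : pbij X => h x) E) as Ex; cbv beta in Ex.
    rewrite pcomp_apply, !pt_eq in Ex. exact Ex.
  - intro Hf. apply pbij_ext; intro a. rewrite pcomp_apply.
    destruct (classic (a = x)) as [->|Ha]; [rewrite !pt_eq; exact Hf | rewrite !pt_neq; auto].
Qed.

Lemma v_iff_two_sided f x y : pcomp (pt y y) (pcomp f (pt x x)) <> zero X <-> f x = Some y.
Proof.
  split.
  - intro Hnz. apply NNPP; intro Hf. apply Hnz, pbij_ext; intro a.
    rewrite !pcomp_apply. simpl (zero X a).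
    destruct (classic (a = x)) as [->|Ha]; [rewrite pt_eq | rewrite pt_neq; auto].
    destruct (f x) as [z|] eqn:E; [rewrite pt_neq; congruence | reflexivity].
  - intros Hf E. pose proof (f_equal (fun h : pbij X => h x) E) as Ex; cbv beta in Ex.
    rewrite !pcomp_apply, pt_eq, Hf, pt_eq in Ex. discriminate.
Qed.

Lemma w1_iff_right_idempotent f x : pcomp f (pt x x) = zero X <-> w1 x f.
Proof.
  unfold w1. split.
  - intro E. pose proof (f_equal (fun h : pbij X => h x) E) as Ex; cbv beta in Ex.
    rewrite pcomp_apply, pt_eq in Ex. exact Ex.
  - intro Hf. apply pbij_ext; intro a. rewrite pcomp_apply.
    destruct (classic (a = x)) as [->|Ha]; [rewrite pt_eq; exact Hf | rewrite pt_neq; auto].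
Qed.

Lemma w2_iff_left_idempotent f y : pcomp (pt y y) f = zero X <-> w2 y f.
Proof.
  unfold w2. split.
  - intros E a Ha. pose proof (f_equal (fun h : pbij X => h a) E) as Ea; cbv beta in Ea.
    rewrite pcomp_apply, Ha, pt_eq in Ea. discriminate.
  - intro Hf. apply pbij_ext; intro a. rewrite pcomp_apply.
    destruct (f a) as [z|] eqn:E; [|reflexivity].
    rewrite pt_neq; [reflexivity | intros ->; exact (Hf a E)].
Qed.

(* f^-1 f is the identity on dom f, so e_x f^-1 f = e_x iff x in dom f. *)
Lemma w1_iff_domain_idempotent f x : pcomp (pt x x) (pcomp (pinv f) f) <> pt x x <-> w1 x f.
Proof.
  unfold w1. split.
  - intro Hne. apply NNPP; intro Hf. apply Hne, pbij_ext; intro a. rewrite !pcomp_apply.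
    destruct (f a) as [z|] eqn:E.
    + rewrite (proj2 (pinv_some f a z) E).
      destruct (classic (a = x)) as [->|Ha]; [rewrite pt_eq; reflexivity | rewrite !pt_neq; auto].
    + destruct (classic (a = x)) as [->|Ha]; [contradiction | rewrite pt_neq; auto].
  - intros Hf E. pose proof (f_equal (fun h : pbij X => h x) E) as Ex; cbv beta in Ex.
    rewrite !pcomp_apply, Hf, pt_eq in Ex. discriminate.
Qed.

(* f f^-1 is the identity on im f, so f f^-1 e_y = e_y iff y in im f. *)
Lemma w2_iff_image_idempotent f y : pcomp (pcomp f (pinv f)) (pt y y) <> pt y y <-> w2 y f.
Proof.
  unfold w2. split.
  - intros Hne a Ha. apply Hne, pbij_ext; intro b. rewrite !pcomp_apply.
    destruct (classic (b = y)) as [->|Hb]; [|rewrite !pt_neq; auto].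
    rewrite pt_eq, pcomp_apply, (proj2 (pinv_some f a y) Ha). exact Ha.
  - intros Hf E. pose proof (f_equal (fun h : pbij X => h y) E) as Ey; cbv beta in Ey.
    rewrite !pcomp_apply, pt_eq, pcomp_apply in Ey.
    destruct (pinv f y) as [a|] eqn:Ea; [|discriminate].
    exact (Hf a (proj1 (pinv_some f a y) Ea)).
Qed.

End Characterisations.

Section OpenSets.
Variables (T : Type) (O : (T -> Prop) -> Prop).
Hypothesis O_top : is_topology O.

Lemma open_ext (P Q : T -> Prop) : O P -> (forall t, P t <-> Q t) -> O Q.
Proof.
  intros HP H. replace Q with P; [exact HP|].
  apply functional_extensionality; intro t; apply propositional_extensionality; auto.
Qed.

Lemma open_of_nbhds (P : T -> Prop) :
  (forall t, P t -> exists U, O U /\ U t /\ (forall s, U s -> P s)) -> O P.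
Proof.
  destruct O_top as [_ [O_union _]]. intro H.
  apply open_ext with (P := fun t => exists U, (O U /\ forall s, U s -> P s) /\ U t).
  - apply O_union. intros U [HU _]; exact HU.
  - intro t; split.
    + intros [U [[_ HUP] Ht]]; auto.
    + intro Ht. destruct (H t Ht) as [U [HU [Ut HUP]]]. exists U; auto.
Qed.

Lemma T1_complement_point_open (c : T) : T1 O -> O (fun t => t <> c).
Proof.
  intro HT1. apply open_of_nbhds. intros t Htc.
  destruct (HT1 t c Htc) as [U [HU [Ut Uc]]].
  exists U; repeat split; auto. intros s Us ->; contradiction.
Qed.

End OpenSets.

Section ContinuousMaps.
Variables (X : Type) (tau : (pbij X -> Prop) -> Prop).
Hypotheses (tau_top : is_topology tau) (tau_mul : mul_continuous tau).

Definition continuous (F : pbij X -> pbij X) : Prop :=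
  forall W, tau W -> tau (fun f => W (F f)).

Lemma continuous_comp (F G : pbij X -> pbij X) :
  continuous F -> continuous G -> continuous (fun f => F (G f)).
Proof. intros HF HG W HW. exact (HG _ (HF W HW)). Qed.

Lemma right_translation_continuous (g : pbij X) : continuous (fun f => pcomp f g).
Proof.
  intros W HW. apply open_of_nbhds; [exact tau_top|]. intros f Hf.
  destruct (tau_mul f g HW Hf) as [U [V [HU [_ [Uf [Vg HUV]]]]]].
  exists U; repeat split; auto.
Qed.

Lemma left_translation_continuous (f : pbij X) : continuous (fun g => pcomp f g).
Proof.
  intros W HW. apply open_of_nbhds; [exact tau_top|]. intros g Hg.
  destruct (tau_mul f g HW Hg) as [U [V [_ [HV [Uf [Vg HUV]]]]]].
  exists V; repeat split; auto.
Qed.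

(* f |-> (f, f^-1) is continuous into the product, hence so are both
   products of f with its inverse. *)
Lemma inverse_products_continuous : inv_continuous tau ->
  continuous (fun f => pcomp (pinv f) f) /\ continuous (fun f => pcomp f (pinv f)).
Proof.
  intro tau_inv. destruct tau_top as [_ [_ tau_inter]].
  split; intros W HW; apply open_of_nbhds; auto; intros f Hf.
  - destruct (tau_mul (pinv f) f HW Hf) as [U [V [HU [HV [Uf [Vf HUV]]]]]].
    exists (fun h => U (pinv h) /\ V h).
    split; [apply tau_inter; auto | split; auto]. intros h [? ?]; auto.
  - destruct (tau_mul f (pinv f) HW Hf) as [U [V [HU [HV [Uf [Vf HUV]]]]]].
    exists (fun h => U h /\ V (pinv h)).
    split; [apply tau_inter; auto | split; auto]. intros h [? ?]; auto.
Qed.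

Hypothesis tau_T1 : T1 tau.

Lemma open_of_neq (F : pbij X -> pbij X) (c : pbij X) (P : pbij X -> Prop) :
  continuous F -> (forall f, F f <> c <-> P f) -> tau P.
Proof.
  intros HF HP. exact (open_ext tau _ _ (HF _ (T1_complement_point_open tau_top c tau_T1)) HP).
Qed.

Lemma closed_of_eq (F : pbij X -> pbij X) (c : pbij X) (P : pbij X -> Prop) :
  continuous F -> (forall f, F f = c <-> P f) -> is_closed tau P.
Proof.
  intros HF HP. apply (open_of_neq (c := c) _ HF). intro f. rewrite HP. tauto.
Qed.

End ContinuousMaps.

Section TopologicalSemigroup.
Variables (X : Type) (tau : (pbij X -> Prop) -> Prop).
Hypotheses (tau_top : is_topology tau) (tau_T1 : T1 tau) (tau_mul : mul_continuous tau).

Lemma v_clopen (x y : X) : is_clopen tau (v x y).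
Proof.
  split.
  - apply (open_of_neq tau_top tau_T1 (c := zero X) _
             (continuous_comp (left_translation_continuous tau_top tau_mul (pt y y))
                              (right_translation_continuous tau_top tau_mul (pt x x)))).
    intro f. apply v_iff_two_sided.
  - apply (closed_of_eq tau_top tau_T1 (c := pt x y) _ (right_translation_continuous tau_top tau_mul (pt x x))).
    intro f. apply v_iff_right_idempotent.
Qed.

Lemma w1_closed (x : X) : is_closed tau (w1 x).
Proof.
  apply (closed_of_eq tau_top tau_T1 (c := zero X) _ (right_translation_continuous tau_top tau_mul (pt x x))).
  intro f. apply w1_iff_right_idempotent.
Qed.

Lemma w2_closed (y : X) : is_closed tau (w2 y).
Proof.
  apply (closed_of_eq tau_top tau_T1 (c := zero X) _ (left_translation_continuous tau_top tau_mul (pt y y))).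
  intro f. apply w2_iff_left_idempotent.
Qed.

Section ContinuousInversion.
Hypothesis tau_inv : inv_continuous tau.

Lemma w1_open (x : X) : tau (w1 x).
Proof.
  apply (open_of_neq tau_top tau_T1 (c := pt x x) _
           (continuous_comp (left_translation_continuous tau_top tau_mul (pt x x))
                            (proj1 (inverse_products_continuous tau_top tau_mul tau_inv)))).
  intro f. apply w1_iff_domain_idempotent.
Qed.

Lemma w2_open (y : X) : tau (w2 y).
Proof.
  apply (open_of_neq tau_top tau_T1 (c := pt y y) _
           (continuous_comp (right_translation_continuous tau_top tau_mul (pt y y))
                            (proj2 (inverse_products_continuous tau_top tau_mul tau_inv)))).
  intro f. apply w2_iff_image_idempotent.
Qed.

End ContinuousInversion.

(* If f is not contained in g, some (a,b) lies in f but not in g, and the box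
   v(a,b) x (complement of v(a,b)) is an open neighbourhood of (f,g) missing
   the inclusion relation. *)
Lemma inclusion_closed : is_closed (prod_open tau) (fun p => pincl (fst p) (snd p)).
Proof.
  intros [f g] Hfg; simpl in Hfg.
  assert (exists a b, f a = Some b /\ g a <> Some b) as [a [b [Hfa Hga]]].
  { apply NNPP; intro Hno. apply Hfg; intros a b Hfa.
    apply NNPP; intro Hga. apply Hno; eauto. }
  destruct (v_clopen a b) as [v_open v_closed].
  exists (v a b), (fun h => ~ v a b h).
  repeat split; simpl; auto.
  intros f' g' Hf' Hg' Hincl. exact (Hg' (Hincl a b Hf')).
Qed.

Lemma tau_pp_coarser : inv_continuous tau -> forall U, tau_pp U -> tau U.
Proof.
  intros tau_inv U HU. apply HU; [exact tau_top|].
  intros V [[x [y ->]] | [[x ->] | [y ->]]].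
  - exact (proj1 (v_clopen x y)).
  - exact (w1_open tau_inv x).
  - exact (w2_open tau_inv y).
Qed.

End TopologicalSemigroup.

Theorem theorem3p3 (X : Type) (tau : (pbij X -> Prop) -> Prop) :
  is_topology tau -> T1 tau -> mul_continuous tau ->
  ( (forall x y : X, is_clopen tau (v x y)) /\
    (forall y : X, is_closed tau (w1 y) /\ is_closed tau (w2 y)) ) /\
  ( inv_continuous tau ->
    (is_closed (prod_open tau) (fun p => pincl (fst p) (snd p)) <->
     (forall x : X, tau (w1 x))) ) /\
  ( Hausdorff tau -> inv_continuous tau ->
    forall U, @tau_pp X U -> tau U ).
Proof.
  intros tau_top tau_T1 tau_mul.
  split; [|split].
  - split.
    + exact (v_clopen tau_top tau_T1 tau_mul).
    + intro y. exact (conj (w1_closed tau_top tau_T1 tau_mul y)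
                           (w2_closed tau_top tau_T1 tau_mul y)).
  - intro tau_inv. split; intros _.
    + exact (w1_open tau_top tau_T1 tau_mul tau_inv).
    + exact (inclusion_closed tau_top tau_T1 tau_mul).
  - intros _ tau_inv. exact (tau_pp_coarser tau_top tau_T1 tau_mul tau_inv).
Qed.
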